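(* Let $K_n$ be the complete graph on $n$ vertices and let $S\subseteq V(K_n)$ with $|S|=s\geq 2$. Then $K_n$ contains $n-\lceil s/2\rceil$ pairwise completely independent $S$-Steiner trees.
   Context: For $S\subseteq V(G)$ with $|S|\ge 2$, an $S$-Steiner tree of $G$ is a subtree $T$ of $G$ with $S\subseteq V(T)$ all of whose leaves belong to $S$. A family of $S$-Steiner trees $T_1,\dots,T_k$ is completely independent if for all $1\le p<q\le k$: $E(T_p)\cap E(T_q)=\emptyset$, $V(T_p)\cap V(T_q)=S$, and for any two vertices $x_1,x_2\in S$ the $(x_1,x_2)$-paths in $T_p$ and in $T_q$ are internally disjoint. *)

From mathcomp Require Import all_boot.
Set Implicit Arguments. Unset Strict Implicit. Unset Printing Implicit Defensive.

Section Steiner.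
Variable V : finType.

Definition simple_graph (G : rel V) := irreflexive G /\ symmetric G.

(* A subgraph is described by a vertex set VT and a set ET of unordered
   edges, each edge being a 2-element set of vertices. *)
Record subgraph := Subgraph { sgV : {set V}; sgE : {set {set V}} }.

Definition is_subgraph_of (G : rel V) (T : subgraph) :=
  forall e, e \in sgE T ->
    exists x y, [/\ e = [set x; y], x != y, G x y, x \in sgV T & y \in sgV T].

Definition adjT (T : subgraph) : rel V := fun a b => [set a; b] \in sgE T.

Definition is_path (T : subgraph) (x y : V) (p : seq V) :=
  [/\ x \in sgV T, path (adjT T) x p, last x p = y & uniq (x :: p)].

Definition connected_sg (T : subgraph) :=
  forall x y, x \in sgV T -> y \in sgV T -> exists p, is_path T x y p.

(* A cycle: pairwise distinct vertices x :: p with |x :: p| >= 3,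
   consecutive vertices adjacent and the last adjacent to x. *)
Definition acyclic_sg (T : subgraph) :=
  forall x p, 2 <= size p -> uniq (x :: p) -> path (adjT T) x p ->
    ~~ adjT T (last x p) x.

Definition is_tree (G : rel V) (T : subgraph) :=
  [/\ is_subgraph_of G T, sgV T != set0, connected_sg T & acyclic_sg T].

Definition degT (T : subgraph) (v : V) := #|[set e in sgE T | v \in e]|.

Definition is_leaf (T : subgraph) (v : V) := (v \in sgV T) && (degT T v == 1).

Definition steiner_tree (G : rel V) (S : {set V}) (T : subgraph) :=
  [/\ is_tree G T, S \subset sgV T & forall v, is_leaf T v -> v \in S].

Definition internal (x y : V) (p : seq V) : {set V} :=
  [set v in x :: p | (v != x) && (v != y)].

Definition completely_independent_pair (S : {set V}) (T1 T2 : subgraph) :=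
  [/\ [disjoint sgE T1 & sgE T2],
      sgV T1 :&: sgV T2 = S &
      forall x1 x2 p q, x1 \in S -> x2 \in S ->
        is_path T1 x1 x2 p -> is_path T2 x1 x2 q ->
        [disjoint internal x1 x2 p & internal x1 x2 q]].

Definition ci_steiner_family (G : rel V) (S : {set V}) (k : nat)
  (F : 'I_k -> subgraph) :=
  (forall i, steiner_tree G S (F i)) /\
  (forall i j, i != j -> completely_independent_pair S (F i) (F j)).

End Steiner.

Definition complete_graph (n : nat) : rel 'I_n := fun x y => x != y.
Arguments complete_graph n : clear implicits.

From mathcomp Require Import all_boot zify.
Set Implicit Arguments. Unset Strict Implicit. Unset Printing Implicit Defensive.

(* Enumerate S as s_0, s_1, ... and group it into the pairs {s_2i, s_2i+1},
   i < |S|/2.  Each vertex w outside S gives the star joining w to S, and each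
   pair i gives a tree on S made of the edge s_2i s_2i+1 with every other vertex
   of S hung on one of these two hubs.  The hub is chosen by the parity of the
   vertex's rank, flipped when its pair comes before i; so an edge between two
   different pairs lies only in the tree of the smaller pair (equal parities)
   or of the larger one (different parities), while stars use only edges at
   their centre, which lies outside S.  Each tree has at most two vertices with
   two distinct neighbours (its centre, resp. its two hubs): hence it has no
   cycle, and all internal vertices of its paths are among them.  These
   branching sets are pairwise disjoint, which gives complete independence,
   and there are (n - |S|) + |S|/2 = n - ceil(|S|/2) trees. *)

Section RelSubgraph.
Variable V : finType.

Definition rel_subgraph (VT : {set V}) (E : rel V) : subgraph V :=
  Subgraph VT [set e | [exists x, exists y, (e == [set x; y]) && E x y]].

Definition branch_set (E : rel V) (B : {set V}) :=
  forall v u z, E v u -> E v z -> u != z -> v \in B.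

Lemma eq_set2 (a b c d : V) :
  [set a; b] = [set c; d] -> (a = c /\ b = d) \/ (a = d /\ b = c).
Proof.
move=> eq_ab_cd.
have /set2P[] : a \in [set c; d] by rewrite -eq_ab_cd set21.
all: have /set2P[] : b \in [set c; d] by rewrite -eq_ab_cd set22.
all: have /set2P[] : c \in [set a; b] by rewrite eq_ab_cd set21.
all: have /set2P[] : d \in [set a; b] by rewrite eq_ab_cd set22.
all: by move=> *; subst; auto.
Qed.

Variables (VT B : {set V}) (E : rel V).
Hypothesis E_sym : symmetric E.
Hypothesis E_irr : irreflexive E.
Hypothesis E_VT : forall x y, E x y -> x \in VT.
Hypothesis E_B : branch_set E B.

Local Notation T := (rel_subgraph VT E).

Lemma adjT_rel_subgraph : adjT T =2 E.
Proof.
move=> a b; rewrite /adjT inE; apply/existsP/idP => [[x /existsP[y]]|Eab].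
  by case/andP=> /eqP/eq_set2[[-> ->]|[-> ->]]; rewrite // E_sym.
by exists a; apply/existsP; exists b; rewrite eqxx.
Qed.

Lemma path_rel_subgraph x p : path (adjT T) x p = path E x p.
Proof. exact/eq_path/adjT_rel_subgraph. Qed.

Lemma rel_subgraph_sub (G : rel V) : subrel E G -> is_subgraph_of G T.
Proof.
move=> EG e; rewrite inE => /existsP[x /existsP[y /andP[/eqP -> Exy]]].
exists x, y; split; rewrite ?EG ?(E_VT Exy) //.
  by apply: contraTneq Exy => ->; rewrite E_irr.
by rewrite E_sym in Exy; apply: E_VT Exy.
Qed.

Lemma rel_subgraph_connected c :
  (forall v, v \in VT -> connect E c v) -> connected_sg T.
Proof.
move=> c_conn x y xVT yVT.
have /connectP[p pE ->] : connect E x y.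
  by apply: connect_trans (c_conn _ yVT); rewrite (sym_connect_sym E_sym) c_conn.
rewrite -path_rel_subgraph in pE.
by case: (shortenP pE) => q qE q_uniq _; exists q.
Qed.

Lemma path_internal_branch x y p : is_path T x y p -> internal x y p \subset B.
Proof.
case=> _ + <- + {y}; rewrite path_rel_subgraph => pE p_uniq.
apply/subsetP => v; rewrite inE => /andP[vxp /andP[vx vl]].
have {vxp} vp : v \in p by rewrite inE (negbTE vx) in vxp.
move: pE p_uniq vl; case/splitPr: p / vp => p1 [|z p2].
  by rewrite last_cat eqxx.
rewrite last_cat => + + _.
rewrite cat_path -cat_cons cat_uniq /= => /and3P[_ E_v /andP[E_vz _]].
case/and3P=> _ /norP[_ /norP[z_p1 _]] _.
rewrite E_sym in E_v; apply: (E_B E_v E_vz).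
by apply: contraNneq z_p1 => <-; apply: mem_last.
Qed.

Lemma cycle_sub_branch c : 2 < size c -> uniq c -> cycle E c -> {subset c <= B}.
Proof.
move=> c_big c_uniq c_cyc v /rot_to[i [|u [|z r]] c_rot];
  move: c_big c_uniq c_cyc; rewrite -(size_rot i) -(rot_uniq i) -(rot_cycle i) c_rot //.
rewrite /= rcons_path => _ /andP[_ /andP[u_zr _]] /and3P[E_vu _ /andP[_ E_lv]].
rewrite E_sym in E_lv; apply: (E_B E_vu E_lv).
by apply: contraNneq u_zr => ->; apply: mem_last.
Qed.

Lemma rel_subgraph_acyclic : #|B| <= 2 -> acyclic_sg T.
Proof.
move=> B_small x p p_big xp_uniq; rewrite path_rel_subgraph adjT_rel_subgraph => pE.
apply/negP => E_lx.
have xp_cyc : cycle E (x :: p) by rewrite /= rcons_path pE.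
have : size (x :: p) <= #|B|.
  rewrite -(card_uniqP xp_uniq); apply/subset_leq_card/subsetP.
  exact: (@cycle_sub_branch (x :: p)).
by move/leq_trans/(_ B_small); rewrite ltnS leqNgt p_big.
Qed.

Lemma rel_subgraph_degT v u z : E v u -> E v z -> u != z -> 1 < degT T v.
Proof.
move=> E_vu E_vz uz; rewrite /degT.
have <- : #|[set [set v; u]; [set v; z]]| = 2.
  rewrite cards2; case: eqP => // /eq_set2[[_ /eqP]|[_ uv]]; first by rewrite (negbTE uz).
  by rewrite uv E_irr in E_vu.
apply/subset_leq_card/subsetP => e; rewrite !inE => /orP[]/eqP->; rewrite set21 andbT.
  by apply/existsP; exists v; apply/existsP; exists u; rewrite eqxx.
by apply/existsP; exists v; apply/existsP; exists z; rewrite eqxx.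
Qed.

Lemma rel_subgraph_steiner (G : rel V) (S : {set V}) c :
  subrel E G -> #|B| <= 2 -> c \in VT -> (forall v, v \in VT -> connect E c v) ->
  S \subset VT -> {in VT, forall v, v \notin S -> 1 < degT T v} ->
  steiner_tree G S T.
Proof.
move=> EG B_small cVT c_conn SVT deg_out; split=> // [|v /andP[vVT /eqP deg1]].
  split; [exact: rel_subgraph_sub | by apply/set0Pn; exists c | |].
    exact: rel_subgraph_connected c_conn.
  exact: rel_subgraph_acyclic.
by apply/negPn/negP => /(deg_out v vVT); rewrite deg1.
Qed.

End RelSubgraph.

Lemma ci_pair_sym (V : finType) (S : {set V}) (T1 T2 : subgraph V) :
  completely_independent_pair S T1 T2 -> completely_independent_pair S T2 T1.
Proof.
case=> E12 V12 P12; split; first by rewrite disjoint_sym.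
  by rewrite setIC.
by move=> x1 x2 p q x1S x2S p2 q1; rewrite disjoint_sym; apply: P12.
Qed.

Lemma rel_subgraph_ci_pair (V : finType) (S VT1 VT2 B1 B2 : {set V}) (E1 E2 : rel V) :
  symmetric E1 -> symmetric E2 -> branch_set E1 B1 -> branch_set E2 B2 ->
  (forall x y, E1 x y -> ~~ E2 x y) -> VT1 :&: VT2 = S -> [disjoint B1 & B2] ->
  completely_independent_pair S (rel_subgraph VT1 E1) (rel_subgraph VT2 E2).
Proof.
move=> E1_sym E2_sym E1_B1 E2_B2 E12 V12 B12; split=> //.
  apply/pred0P => e /=; apply/negP => /andP[].
  rewrite !inE => /existsP[x /existsP[y /andP[/eqP -> E1xy]]].
  case/existsP=> x' /existsP[y' /andP[/eqP/eq_set2 eq_xy E2xy]].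
  by have /negP := E12 _ _ E1xy; apply; case: eq_xy => -[-> ->]; rewrite // E2_sym.
move=> x1 x2 p q _ _ /(path_internal_branch E1_sym E1_B1) p_B1.
move=> /(path_internal_branch E2_sym E2_B2) q_B2.
exact: disjointWl p_B1 (disjointWr q_B2 B12).
Qed.

Lemma ci_steiner_family_cat (V : finType) (G : rel V) (S : {set V}) a b
    (F1 : 'I_a -> subgraph V) (F2 : 'I_b -> subgraph V) :
  ci_steiner_family G S F1 -> ci_steiner_family G S F2 ->
  (forall i j, completely_independent_pair S (F1 i) (F2 j)) ->
  ci_steiner_family G S
    (fun k => match split k with inl i => F1 i | inr j => F2 j end).
Proof.
move=> [F1_st F1_ci] [F2_st F2_ci] F12; split=> [k | k l].
  by case: splitP => i _; [apply: F1_st | apply: F2_st].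
case: splitP => i ki; case: splitP => j lj kl.
- by apply: F1_ci; apply: contra_neq kl => ij; apply: val_inj; rewrite /= ki lj ij.
- exact: F12.
- exact/ci_pair_sym/F12.
- by apply: F2_ci; apply: contra_neq kl => ij; apply: val_inj; rewrite /= ki lj ij.
Qed.

Section StarsAndPairs.
Variables (V : finType) (S : {set V}).

Definition star_rel (w : V) : rel V :=
  fun x y => (x == w) && (y \in S) || (y == w) && (x \in S).

Definition star (w : V) := rel_subgraph (w |: S) (star_rel w).

Definition srank (v : V) := index v (enum S).
Definition pair_of (v : V) := (srank v)./2.
Definition side (v : V) := odd (srank v).

Definition hangs_on i x y :=
  [&& pair_of x != i, pair_of y == i & side y == side x (+) (pair_of x < i)].

Definition pair_rel i : rel V := fun x y =>
  [&& x \in S, y \in S, x != y &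
      [|| (pair_of x == i) && (pair_of y == i), hangs_on i x y | hangs_on i y x]].

Definition pair_tree i := rel_subgraph S (pair_rel i).

Definition edge_owner x y :=
  if side x == side y then minn (pair_of x) (pair_of y)
  else maxn (pair_of x) (pair_of y).

Lemma pair_side_inj :
  {in S &, forall u v, pair_of u = pair_of v -> side u = side v -> u = v}.
Proof.
move=> u v uS vS; rewrite /pair_of /side => pu su.
have srank_uv : srank u = srank v.
  by rewrite -[srank u]odd_double_half -[srank v]odd_double_half pu su.
by apply: (index_inj u _ _ srank_uv); rewrite mem_enum.
Qed.

Lemma pair_side_onto i b :
  i < #|S|./2 -> exists2 v, v \in S & pair_of v = i /\ side v = b.
Proof.
move=> i_lt; have k_lt : b + i.*2 < #|S|.
  by move: (odd_double_half #|S|) i_lt; rewrite -!muln2; case: b; lia.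
pose v := enum_val (Ordinal k_lt : 'I_#|S|).
have rank_v : srank v = b + i.*2.
  by rewrite /srank /v (enum_val_nth v) index_uniq ?enum_uniq // -cardE.
exists v; first exact: enum_valP.
by rewrite /pair_of /side rank_v half_bit_double oddD odd_double addbF oddb.
Qed.

Lemma star_rel_sym w : symmetric (star_rel w).
Proof. by move=> x y; rewrite /star_rel orbC. Qed.

Lemma pair_rel_sym i : symmetric (pair_rel i).
Proof.
move=> x y; rewrite /pair_rel eq_sym andbCA (andbC (pair_of x == i)).
by rewrite (orbC (hangs_on i x y)).
Qed.

Section Star.
Variable w : V.
Hypothesis wS : w \notin S.

Lemma star_rel_irr : irreflexive (star_rel w).
Proof. by move=> x; rewrite /star_rel orbb; case: eqP => // ->; apply/negbTE. Qed.

Lemma star_rel_VT x y : star_rel w x y -> x \in w |: S.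
Proof. by rewrite !inE => /orP[/andP[-> _] | /andP[_ ->]]; rewrite ?orbT. Qed.

Lemma star_rel_branch : branch_set (star_rel w) [set w].
Proof.
move=> v u z; rewrite inE /star_rel.
by case: eqP => //= _ /andP[/eqP-> _] /andP[/eqP-> _]; rewrite eqxx.
Qed.

Lemma star_steiner (G : rel V) :
  2 <= #|S| -> subrel (star_rel w) G -> steiner_tree G S (star w).
Proof.
case/card_gt1P=> s1 [s2 [s1S s2S s12]] EG.
apply: (rel_subgraph_steiner (star_rel_sym w) star_rel_irr star_rel_VT star_rel_branch
          (c := w)) => //.
- by rewrite cards1.
- exact: setU11.
- move=> v; rewrite !inE => /orP[/eqP-> | vS]; first exact: connect0.
  by apply: connect1; rewrite /star_rel eqxx vS.
- exact: subsetUr.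
move=> v; rewrite !inE => /orP[/eqP-> _ | -> //].
by apply: (@rel_subgraph_degT _ _ _ star_rel_irr w s1 s2) => //;
  rewrite /star_rel eqxx ?s1S ?s2S.
Qed.
End Star.

Definition pair_set i := [set v in S | pair_of v == i].

Section PairTree.
Variable i : nat.

Lemma pair_rel_irr : irreflexive (pair_rel i).
Proof. by move=> x; rewrite /pair_rel eqxx !andbF. Qed.

Lemma pair_rel_VT x y : pair_rel i x y -> x \in S.
Proof. by case/andP. Qed.

Lemma pair_rel_branch : branch_set (pair_rel i) (pair_set i).
Proof.
move=> v u z /and4P[vS uS _ Evu] /and4P[_ zS _ Evz]; rewrite inE vS /=.
have [//|pv] := eqVneq (pair_of v) i.
move: Evu Evz; rewrite /hangs_on (negbTE pv) /= !andbF !orbF.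
move=> /andP[/eqP pu /eqP su] /andP[/eqP pz /eqP sz].
by rewrite (pair_side_inj uS zS) ?eqxx ?pu ?pz ?su ?sz.
Qed.

Lemma card_pair_set : #|pair_set i| <= 2.
Proof.
rewrite -[2]card_bool; apply: (@leq_card_in _ _ side) => u v.
rewrite !inE => /andP[uS /eqP pu] /andP[vS /eqP pv].
by apply: pair_side_inj; rewrite ?pu ?pv.
Qed.

Lemma pair_tree_steiner (G : rel V) :
  i < #|S|./2 -> subrel (pair_rel i) G -> steiner_tree G S (pair_tree i).
Proof.
move=> i_lt EG.
have [h0 h0S [p0 s0]] := pair_side_onto false i_lt.
have [h1 h1S [p1 s1]] := pair_side_onto true i_lt.
have hub_conn h : h \in pair_set i -> connect (pair_rel i) h0 h.
  rewrite inE => /andP[hS /eqP ph]; case sh: (side h).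
    rewrite (pair_side_inj hS h1S) ?ph ?sh //; apply: connect1.
    rewrite /pair_rel h0S h1S p0 p1 eqxx /= andbT.
    by apply: contraFneq s0 => ->; rewrite s1.
  by rewrite (pair_side_inj hS h0S) ?ph ?sh.
apply: (rel_subgraph_steiner (pair_rel_sym i) pair_rel_irr pair_rel_VT pair_rel_branch
          (c := h0)) => //; [exact: card_pair_set | | by move=> v ->].
move=> v vS; case: (eqVneq (pair_of v) i) => pv.
  by apply: hub_conn; rewrite inE vS pv eqxx.
have [h hS [ph sh]] := pair_side_onto (side v (+) (pair_of v < i)) i_lt.
apply: connect_trans (hub_conn h _) (connect1 _); first by rewrite inE hS ph eqxx.
rewrite /pair_rel hS vS /hangs_on ph sh pv !eqxx !orbT andbT.
by apply: contra_neq pv => <-.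
Qed.
End PairTree.

Lemma edge_owner_sym x y : edge_owner x y = edge_owner y x.
Proof. by rewrite /edge_owner eq_sym minnC maxnC. Qed.

Lemma hangs_on_edge_owner i x y : hangs_on i x y -> edge_owner x y = i.
Proof.
rewrite /hangs_on /edge_owner => /and3P[px /eqP py /eqP sy]; rewrite py sy.
by case: (ltngtP (pair_of x) i) px; rewrite ?addbT ?addbF ?eqxx //; case: (side x).
Qed.

Lemma pair_rel_edge_owner i x y : pair_rel i x y -> edge_owner x y = i.
Proof.
case/and4P=> _ _ _ /or3P[/andP[/eqP px /eqP py] | /hangs_on_edge_owner // | ].
  by rewrite /edge_owner px py minnn maxnn if_same.
by rewrite edge_owner_sym => /hangs_on_edge_owner.
Qed.

Lemma pair_rel_disjoint i j x y : i != j -> pair_rel i x y -> ~~ pair_rel j x y.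
Proof.
move=> ij /pair_rel_edge_owner oi.
by apply: contra ij => /pair_rel_edge_owner oj; rewrite -oi -oj.
Qed.

Lemma star_pair_rel_disjoint w i x y :
  w \notin S -> star_rel w x y -> ~~ pair_rel i x y.
Proof.
by move=> wS /orP[]/andP[/eqP-> _]; rewrite /pair_rel (negbTE wS) ?andbF.
Qed.

Lemma star_rel_disjoint w w' x y : w != w' -> w \notin S -> w' \notin S ->
  star_rel w x y -> ~~ star_rel w' x y.
Proof.
move=> ww' wS w'S /orP[]/andP[/eqP-> S_y]; apply/negP => /orP[]/andP[/eqP e S_x].
all: by move: ww' wS w'S; rewrite ?e ?eqxx ?S_x ?S_y.
Qed.

Lemma ci_stars w w' : w != w' -> w \notin S -> w' \notin S ->
  completely_independent_pair S (star w) (star w').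
Proof.
move=> ww' wS w'S; apply: rel_subgraph_ci_pair.
- exact: star_rel_sym.
- exact: star_rel_sym.
- exact: star_rel_branch.
- exact: star_rel_branch.
- by move=> x y; apply: star_rel_disjoint.
- rewrite -setUIl (_ : [set w] :&: [set w'] = set0) ?set0U //.
  by apply/disjoint_setI0; rewrite disjoints1 inE.
- by rewrite disjoints1 inE.
Qed.

Lemma ci_star_pair w i : w \notin S ->
  completely_independent_pair S (star w) (pair_tree i).
Proof.
move=> wS; apply: rel_subgraph_ci_pair.
- exact: star_rel_sym.
- exact: pair_rel_sym.
- exact: star_rel_branch.
- exact: pair_rel_branch.
- by move=> x y; apply: star_pair_rel_disjoint.
- exact/setIidPr/subsetUr.
- by rewrite disjoints1 inE (negbTE wS).
Qed.

Lemma ci_pairs i j : i != j ->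
  completely_independent_pair S (pair_tree i) (pair_tree j).
Proof.
move=> ij; apply: rel_subgraph_ci_pair.
- exact: pair_rel_sym.
- exact: pair_rel_sym.
- exact: pair_rel_branch.
- exact: pair_rel_branch.
- by move=> x y; apply: pair_rel_disjoint.
- exact: setIid.
apply/pred0P => v /=; rewrite !inE.
by apply: contraNF ij => /andP[/andP[_ /eqP <-] /andP[_ /eqP <-]].
Qed.

Lemma stars_pairs_family (G : rel V) :
  2 <= #|S| -> (forall x y, x != y -> (x \in S) || (y \in S) -> G x y) ->
  exists F : 'I_(#|~: S| + #|S|./2) -> subgraph V, ci_steiner_family G S F.
Proof.
move=> S_big G_S.
have star_G w : w \notin S -> subrel (star_rel w) G.
  move=> wS x y Exy; apply: G_S.
    by apply: contraTneq Exy => ->; rewrite star_rel_irr.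
  by case/orP: Exy => /andP[_ ->]; rewrite ?orbT.
have pair_G i : subrel (pair_rel i) G.
  by move=> x y /and4P[xS _ xy _]; apply: G_S; rewrite ?xS.
have out_S (j : 'I_#|~: S|) : enum_val j \notin S by have := enum_valP j; rewrite inE.
exists (fun k => match split k with
                 | inl j => star (enum_val j) | inr i => pair_tree i end).
apply: ci_steiner_family_cat => [| | j i]; last exact: ci_star_pair.
  split=> [j | j j' jj']; first by apply: star_steiner => //; apply: star_G.
  by apply: ci_stars => //; rewrite (inj_eq enum_val_inj).
split=> [i | i j ij]; first exact: pair_tree_steiner (ltn_ord i) (pair_G i).
exact: ci_pairs.
Qed.
End StarsAndPairs.

Theorem theorem2p6 (n : nat) (S : {set 'I_n}) :
  2 <= #|S| ->
  exists F : 'I_(n - uphalf #|S|) -> subgraph 'I_n,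
    ci_steiner_family (complete_graph n) S F.
Proof.
move=> S_big.
have -> : n - uphalf #|S| = #|~: S| + #|S|./2.
  move: (cardsC S) (odd_double_half #|S|); rewrite card_ord uphalf_half -muln2; lia.
by apply: stars_pairs_family.
Qed.
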